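(* Let $\mathbb{G}\subset\mathbb{N}$ be a finite set with $0\in\mathbb{G}$, let $\ell\in\mathbb{N}$, and define the symmetric array $$\mathbb{S}=\mathbb{S}(\mathbb{G},\ell)\triangleq\mathbb{G}\cup(\max\mathbb{G}-\mathbb{G}+\ell).$$ If $\mathbb{G}-\mathbb{G}\supseteq[0:\max\mathbb{G}]$ and $\mathbb{G}+\mathbb{G}\supseteq[0:\ell-1]$, then $\mathbb{S}+\mathbb{S}=[0:2\max\mathbb{S}]$.
   Context: For finite sets $\mathbb{A},\mathbb{B}\subset\mathbb{Z}$ and $c\in\mathbb{Z}$: $\mathbb{A}+\mathbb{B}=\{a+b: a\in\mathbb{A},b\in\mathbb{B}\}$, $\mathbb{A}-\mathbb{B}=\{a-b: a\in\mathbb{A},b\in\mathbb{B}\}$, $c-\mathbb{A}=\{c-a:a\in\mathbb{A}\}$, $\mathbb{A}+c=\{a+c:a\in\mathbb{A}\}$. For $a,b\in\mathbb{R}$, $[a:b]=\{c\in\mathbb{Z}: a\le c\le b\}$ (empty if $b<a$). $\mathbb{N}$ includes $0$. *)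

(* Finite sets of integers are represented as finite sets
   {fset int} (mathcomp-finmap); N is embedded in Z via Posz. *)
From mathcomp Require Import all_boot all_order all_algebra.
From mathcomp Require Import finmap.
Set Implicit Arguments. Unset Strict Implicit. Unset Printing Implicit Defensive.
Import Order.TTheory GRing.Theory Num.Theory.
Local Open Scope ring_scope.
Local Open Scope fset_scope.

Definition sumset (A B : {fset int}) : {fset int} := [fset (a + b)%R | a in A, b in B].
Definition diffset (A B : {fset int}) : {fset int} := [fset (a - b)%R | a in A, b in B].
Definition csub (c : int) (A : {fset int}) : {fset int} := [fset (c - a)%R | a in A].
Definition shift (A : {fset int}) (c : int) : {fset int} := [fset (a + c)%R | a in A].

(* maximum of a finite set of integers (used only for nonempty sets) *)
Definition fmax (A : {fset int}) : int := \big[Order.max/0]_(a <- A) a.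

Definition in_interval (a b c : int) : bool := (a <= c) && (c <= b).

Definition symarray (G : {fset int}) (l : nat) : {fset int} :=
  G `|` shift (csub (fmax G) G) (Posz l).

(* Write M = max G.  The array S is contained in [0 : M + l] and is symmetric
   under s |-> M + l - s, hence so is S + S under c |-> 2(M + l) - c; it thus
   suffices to cover the lower half [0 : M + l].  Below l the hypothesis on
   G + G applies; for l <= c <= M + l write M + l - c = a - b with a, b in G,
   so that c = b + (M - a + l) is a sum of an element of G and one of its
   mirror images. *)

From mathcomp Require Import all_boot all_order all_algebra.
From mathcomp Require Import finmap.
From mathcomp Require Import zify.
Import Order.TTheory GRing.Theory Num.Theory.
Local Open Scope fset_scope.
Local Open Scope ring_scope.

Lemma sumsetP (A B : {fset int}) c :
  reflect (exists a b, [/\ a \in A, b \in B & c = a + b]) (c \in sumset A B).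
Proof.
apply: (iffP (imfset2P _ _ _ _ _)) => [[a Ha [b Hb ->]]|[a [b [Ha Hb ->]]]].
  by exists a, b.
by exists a => //; exists b.
Qed.

Lemma diffsetP (A B : {fset int}) c :
  reflect (exists a b, [/\ a \in A, b \in B & c = a - b]) (c \in diffset A B).
Proof.
apply: (iffP (imfset2P _ _ _ _ _)) => [[a Ha [b Hb ->]]|[a [b [Ha Hb ->]]]].
  by exists a, b.
by exists a => //; exists b.
Qed.

Lemma sumsetS (A B A' B' : {fset int}) :
  {subset A <= A'} -> {subset B <= B'} -> {subset sumset A B <= sumset A' B'}.
Proof.
move=> sAA' sBB' c /sumsetP [a [b [Ha Hb ->]]].
by apply/sumsetP; exists a, b; split; [apply: sAA' | apply: sBB' |].
Qed.

Lemma sumset_reflect (A : {fset int}) (m c : int) :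
  (forall a, a \in A -> m - a \in A) ->
  c \in sumset A A -> 2 * m - c \in sumset A A.
Proof.
move=> reflA /sumsetP [a [b [Ha Hb ->]]].
by apply/sumsetP; exists (m - a), (m - b); split; rewrite ?reflA //; lia.
Qed.

Lemma fmax_ge {A : {fset int}} {a : int} : a \in A -> a <= fmax A.
Proof. by move=> Aa; apply: (le_bigmax_seq 0 a predT id). Qed.

Lemma fmax_le (A : {fset int}) m :
  0 <= m -> (forall a, a \in A -> a <= m) -> fmax A <= m.
Proof. by move=> m_ge0 leAm; rewrite /fmax big_seq; apply: bigmax_le. Qed.

Lemma fmax_eq (A : {fset int}) m :
  m \in A -> 0 <= m -> (forall a, a \in A -> a <= m) -> fmax A = m.
Proof.
move=> Am m_ge0 leAm; apply/eqP; rewrite eq_le.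
by rewrite fmax_le ?fmax_ge.
Qed.

Section SymmetricArray.

Variables (G : {fset int}) (l : nat).
Local Notation M := (fmax G).
Local Notation S := (symarray G l).

Lemma symarrayP c :
  reflect (c \in G \/ exists2 g, g \in G & c = M - g + Posz l) (c \in S).
Proof.
rewrite /symarray in_fsetU; apply: (iffP orP) => -[|]; try by left.
  by move=> /imfsetP [_ /imfsetP [g /= Gg ->] ->]; right; exists g.
move=> [g Gg ->]; right; apply/imfsetP; exists (M - g) => //.
by apply/imfsetP; exists g.
Qed.

Lemma symarray_subl : {subset G <= S}.
Proof. by move=> g Gg; apply/symarrayP; left. Qed.

Lemma mem_symarray_mirror {g : int} : g \in G -> M - g + Posz l \in S.
Proof. by move=> Gg; apply/symarrayP; right; exists g. Qed.

Lemma symarray_reflect s : s \in S -> M + Posz l - s \in S.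
Proof.
case/symarrayP => [Gs|[g Gg ->]]; first by rewrite addrAC mem_symarray_mirror.
have -> : M + Posz l - (M - g + Posz l) = g by lia.
exact: symarray_subl.
Qed.

Hypotheses (G_ge0 : forall g, g \in G -> 0 <= g) (G0 : 0 \in G).

Lemma symarray_bounds s : s \in S -> 0 <= s <= M + Posz l.
Proof.
case/symarrayP => [Gs|[g Gg ->]].
  by have := G_ge0 _ Gs; have := fmax_ge Gs; lia.
by have := G_ge0 _ Gg; have := fmax_ge Gg; lia.
Qed.

Lemma fmax_symarray : fmax S = M + Posz l.
Proof.
have M_ge0 : 0 <= M := fmax_ge G0.
apply: fmax_eq; first by have := mem_symarray_mirror G0; rewrite subr0.
  by lia.
by move=> s /symarray_bounds /andP [].
Qed.

Hypotheses
  (diffG : forall c, in_interval 0 M c -> c \in diffset G G)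
  (sumG : forall c, in_interval 0 (Posz l - 1) c -> c \in sumset G G).

Lemma sumset_symarray_low c :
  0 <= c <= M + Posz l -> c \in sumset S S.
Proof.
move=> /andP [c_ge0 c_le]; have [c_lt_l | l_le_c] := ltP c (Posz l).
  apply: sumsetS symarray_subl symarray_subl _ _.
  by apply: sumG; rewrite /in_interval; lia.
have /diffsetP [a [b [Ga Gb Eab]]] : M + Posz l - c \in diffset G G.
  by apply: diffG; rewrite /in_interval; lia.
apply/sumsetP; exists b, (M - a + Posz l).
by split; [exact: symarray_subl | exact: mem_symarray_mirror | lia].
Qed.

Lemma sumset_symarray c :
  (c \in sumset S S) = (0 <= c <= 2 * (M + Posz l)).
Proof.
apply/idP/idP => [/sumsetP [a [b [/symarray_bounds Sa /symarray_bounds Sb ->]]]|].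
  by lia.
move=> /andP [c_ge0 c_le]; have [c_low | c_high] := leP c (M + Posz l).
  by apply: sumset_symarray_low; lia.
have -> : c = 2 * (M + Posz l) - (2 * (M + Posz l) - c) by lia.
apply: sumset_reflect; first exact: symarray_reflect.
by apply: sumset_symarray_low; lia.
Qed.

End SymmetricArray.

Theorem theorem1 (G : {fset int}) (l : nat) :
  (forall g, g \in G -> 0 <= g) ->
  0 \in G ->
  (forall c : int, in_interval 0 (fmax G) c -> c \in diffset G G) ->
  (forall c : int, in_interval 0 (Posz l - 1) c -> c \in sumset G G) ->
  forall c : int,
    (c \in sumset (symarray G l) (symarray G l)) =
    in_interval 0 (2 * fmax (symarray G l)) c.
Proof.
move=> G_ge0 G0 diffG sumG c.
by rewrite fmax_symarray // sumset_symarray /in_interval.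
Qed.
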